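(* Let $R$ be a commutative ring with identity, $M$ an $R$-module, $a\in R$, and $\mathfrak{a}=aR$ the ideal of $R$ generated by $a$. The following statements are equivalent: (1) $M$ is $a$-reduced; (2) $a\Gamma_{a}(M)=0$; (3) $(0:_M a)=(0:_M a^{k})$ for all $k\in\mathbb{Z}^{+}$; (4) $\varinjlim_{k}\operatorname{Hom}_R(R/\mathfrak{a}^{k},M)\cong \operatorname{Hom}_R(R/\mathfrak{a},M)$; (5) $\Gamma_{a}(M)\cong \operatorname{Hom}_R(R/\mathfrak{a},M)$; (6) $0\to \Gamma_{a}(M)\to M\to aM\to 0$ is a short exact sequence, where the first map is the inclusion and the second is $m\mapsto am$.
   Context: All rings are commutative with identity. For an $R$-module $M$ and $a\in R$: $M$ is called $a$-reduced if for all $m\in M$, $a^{2}m=0$ implies $am=0$. $\Gamma_{a}(M)=\{m\in M \mid a^{k}m=0 \text{ for some } k\in\mathbb{Z}^{+}\}$, and $a\Gamma_{a}(M)=\{am \mid m\in M,\ a^{k}m=0 \text{ for some } k\in\mathbb{Z}^{+}\}$. For $k\in\mathbb{Z}^+$, $(0:_M a^{k})=\{m\in M\mid a^{k}m=0\}$. The direct limit in (4) is over the natural maps induced by the surjections $R/\mathfrak{a}^{k+1}\to R/\mathfrak{a}^{k}$. *)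

From HB Require Import structures.
From mathcomp Require Import all_boot all_algebra.

Set Implicit Arguments.
Unset Strict Implicit.
Unset Printing Implicit Defensive.

Import GRing.Theory.
Local Open Scope ring_scope.

Section ModuleNotions.
Variables (R : comNzRingType) (M : lmodType R).

Definition a_reduced (a : R) : Prop :=
  forall m : M, a ^+ 2 *: m = 0 -> a *: m = 0.

Definition Gamma (a : R) : M -> Prop :=
  fun m => exists k : nat, (0 < k)%N /\ a ^+ k *: m = 0.

Definition aGamma (a : R) : M -> Prop :=
  fun x => exists m, Gamma a m /\ x = a *: m.

Definition aM (a : R) : M -> Prop := fun x => exists m : M, x = a *: m.

Definition annM (a : R) (k : nat) : M -> Prop := fun m => a ^+ k *: m = 0.

(* the ideal a^k R = (aR)^k *)
Definition ideal_pow (a : R) (k : nat) : R -> Prop :=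
  fun x => exists r : R, x = a ^+ k * r.

(* Hom_R(R/I, M), represented (via composition with the canonical
   projection R -> R/I) as the R-linear maps f : R -> M vanishing on I.
   Its R-module structure is pointwise (fadd, fscl below). *)
Definition HomQ (I : R -> Prop) : (R -> M) -> Prop :=
  fun f => (forall x y, f (x + y) = f x + f y) /\
           (forall r x, f (r * x) = r *: f x) /\
           (forall x, I x -> f x = 0).

Definition fadd (f g : R -> M) : R -> M := fun x => f x + g x.
Definition fscl (r : R) (f : R -> M) : R -> M := fun x => r *: f x.

(* Transition map Hom_R(R/a^k, M) -> Hom_R(R/a^(k+1), M) induced by the
   surjection R/a^(k+1) -> R/a^k.  Under the above representation
   (fbar |-> fbar \o proj), the map fbar |-> fbar \o pi_{k+1,k} becomes the
   identity, since (fbar \o pi_{k+1,k}) \o proj_{k+1} = fbar \o proj_k. *)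
Definition hom_trans (k : nat) (f : R -> M) : R -> M := f.

Definition hom_system (a : R) (k : nat) : (R -> M) -> Prop :=
  fun f => (0 < k)%N /\ HomQ (ideal_pow a k) f.

End ModuleNotions.

(* Direct limit of a nat-indexed direct system of modules, all carried  *)
(* by subsets S k of one ambient type X with module operations addX,    *)
(* sclX, and transition maps t k : S k -> S (k+1).  Standard explicit    *)
(* construction: pairs (k, x) with x in S k, modulo                      *)
(* (k,x) ~ (l,y) iff they agree after pushing to some common index.     *)
Section DirectLimit.
Variables (R : Type) (X : Type) (addX : X -> X -> X) (sclX : R -> X -> X).
Variables (S : nat -> X -> Prop) (t : nat -> X -> X).

Fixpoint push_up (k d : nat) (x : X) : X :=
  match d with
  | 0 => x
  | d'.+1 => t (k + d') (push_up k d' x)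
  end.

Definition transport (k n : nat) (x : X) : X := push_up k (n - k) x.

Definition dl_carrier : nat * X -> Prop := fun p => S p.1 p.2.

Definition dl_eq (p q : nat * X) : Prop :=
  exists n, (p.1 <= n)%N /\ (q.1 <= n)%N /\
            transport p.1 n p.2 = transport q.1 n q.2.

Definition dl_add (p q : nat * X) : nat * X :=
  let n := maxn p.1 q.1 in (n, addX (transport p.1 n p.2) (transport q.1 n q.2)).

Definition dl_scl (r : R) (p : nat * X) : nat * X := (p.1, sclX r p.2).

End DirectLimit.

(* phi is an R-module isomorphism from (A / eqX) onto B, where A, B are  *)
(* modules carried by subsets of ambient types with the given operations *)
Definition sub_iso (R X Y : Type)
  (A : X -> Prop) (eqX : X -> X -> Prop) (addX : X -> X -> X) (sclX : R -> X -> X)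
  (B : Y -> Prop) (addY : Y -> Y -> Y) (sclY : R -> Y -> Y) (phi : X -> Y) : Prop :=
  (forall x, A x -> B (phi x)) /\
  (forall x y, A x -> A y -> eqX x y -> phi x = phi y) /\
  (forall x y, A x -> A y -> phi (addX x y) = addY (phi x) (phi y)) /\
  (forall r x, A x -> phi (sclX r x) = sclY r (phi x)) /\
  (forall x y, A x -> A y -> phi x = phi y -> eqX x y) /\
  (forall y, B y -> exists2 x, A x & phi x = y).

Definition short_exact (X Y Z : zmodType)
  (A : X -> Prop) (B : Y -> Prop) (C : Z -> Prop) (i : X -> Y) (p : Y -> Z) : Prop :=
  [/\ (forall x, A x -> B (i x)),
      (forall y, B y -> C (p y)),
      (forall x x', A x -> A x' -> i x = i x' -> x = x'),
      (forall y, B y -> (p y = 0 <-> exists2 x, A x & i x = y)) &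
      (forall z, C z -> exists2 y, B y & p y = z)].

From HB Require Import structures.
From mathcomp Require Import all_boot all_algebra.
From Stdlib Require Import FunctionalExtensionality.

Set Implicit Arguments.
Unset Strict Implicit.
Unset Printing Implicit Defensive.

Import GRing.Theory.
Local Open Scope ring_scope.

(* All six conditions are equivalent to [a Γ_a(M) = 0]: a kills every
   element killed by some power of a.  Reducedness and the stabilisation of
   (0 :_M a^k) give this by induction on the exponent, and exactness of
   0 -> Γ_a(M) -> M -> aM -> 0 says exactly that Γ_a(M) = (0 :_M a).  A map
   f : R -> M vanishing on a^k R is determined by f 1, which lies in
   (0 :_M a^k); hence Hom_R(R/aR, M) is killed by a, so neither the direct
   limit (essentially Γ_a(M), as the transition maps are identities) nor
   Γ_a(M) itself can be isomorphic to it unless a Γ_a(M) = 0; conversely,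
   when a Γ_a(M) = 0 evaluation at 1 provides both isomorphisms. *)

Section HomQuotient.
Variables (R : comNzRingType) (M : lmodType R).
Implicit Types (I : R -> Prop) (f : R -> M) (m : M).

Lemma HomQ_scale_eval1 I f x : HomQ I f -> f x = x *: f 1.
Proof. by case=> [_ [fZ _]]; rewrite -fZ mulr1. Qed.

Lemma HomQ_fscl I r f : HomQ I f -> HomQ I (fscl r f).
Proof.
case=> [fD [fZ fI]]; split; [|split] => [x y|s x|x Ix]; rewrite /fscl.
- by rewrite fD scalerDr.
- by rewrite fZ !scalerA mulrC.
- by rewrite fI // scaler0.
Qed.

Lemma HomQ_ideal_pow_scale (a : R) k m :
  a ^+ k *: m = 0 -> HomQ (ideal_pow a k) (fun x => x *: m).
Proof.
move=> akm; split; [|split] => [x y|r x|x [r ->]].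
- by rewrite scalerDl.
- by rewrite scalerA.
- by rewrite mulrC -scalerA akm scaler0.
Qed.

Lemma HomQ_ideal_pow_ann (a : R) k f x :
  HomQ (ideal_pow a k) f -> a ^+ k *: f x = 0.
Proof. by case=> [_ [fZ fI]]; rewrite -fZ; apply: fI; exists x. Qed.

Lemma HomQ_ideal_pow1_fscl (a : R) f :
  HomQ (ideal_pow a 1) f -> fscl a f = fscl 0 f.
Proof.
move=> f_a; apply: functional_extensionality => x.
by rewrite /fscl scale0r -[a]expr1 (HomQ_ideal_pow_ann x f_a).
Qed.

(* Any module isomorphic to Hom_R(R/aR, M) is killed by a. *)
Lemma sub_iso_HomQ_ideal_pow1 (a : R) (X : Type) (A : X -> Prop) eqX addX
    (sclX : R -> X -> X) phi :
  sub_iso A eqX addX sclX (HomQ (ideal_pow a 1)) (@fadd R M) (@fscl R M) phi ->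
  forall x, A x -> A (sclX a x) -> A (sclX 0 x) -> eqX (sclX a x) (sclX 0 x).
Proof.
case=> [phiA [_ [_ [phiZ [phi_inj _]]]]] x Ax Aax A0x.
apply: phi_inj => //; rewrite !phiZ //.
exact/HomQ_ideal_pow1_fscl/phiA.
Qed.

Lemma transport_hom_trans k n f : transport (@hom_trans R M) k n f = f.
Proof. by rewrite /transport; elim: (n - k)%N => //= d ->. Qed.

End HomQuotient.

Section Equivalences.
Variables (R : comNzRingType) (M : lmodType R) (a : R).

Definition Gamma_killed : Prop := forall m : M, Gamma a m -> a *: m = 0.

Definition dlim_Hom_iso : Prop :=
  exists phi : nat * (R -> M) -> (R -> M),
    sub_iso (dl_carrier (@hom_system R M a)) (dl_eq (@hom_trans R M))
            (dl_add (@fadd R M) (@hom_trans R M)) (dl_scl (@fscl R M))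
            (HomQ (ideal_pow a 1)) (@fadd R M) (@fscl R M) phi.

Definition Gamma_Hom_iso : Prop :=
  exists psi : M -> (R -> M),
    sub_iso (@Gamma R M a) (fun x y : M => x = y) (fun x y : M => x + y)
            (fun (r : R) (m : M) => r *: m)
            (HomQ (ideal_pow a 1)) (@fadd R M) (@fscl R M) psi.

Lemma Gamma_scale (m : M) r : Gamma a m -> Gamma a (r *: m).
Proof.
by case=> k [k_gt0 akm]; exists k; rewrite scalerA mulrC -scalerA akm scaler0.
Qed.

Lemma a_reduced_Gamma_killed : a_reduced M a <-> Gamma_killed.
Proof.
split=> [red m [k [k_gt0 akm]]|killed m a2m]; last by apply: killed; exists 2%N.
elim: k k_gt0 m akm => // -[_ _ m|k IHk _ m akm]; first by rewrite expr1.
apply: red; rewrite expr2 -scalerA; apply: IHk => //.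
by rewrite scalerA -exprSr.
Qed.

Lemma aGamma_eq0_Gamma_killed :
  (forall x : M, aGamma a x <-> x = 0) <-> Gamma_killed.
Proof.
split=> [aG0 m Gm|killed x]; first by apply/aG0; exists m.
split=> [[m [Gm ->]]|->]; first exact: killed.
by exists 0; split; [exists 1%N; rewrite scaler0 | rewrite scaler0].
Qed.

Lemma annM_stable_Gamma_killed :
  (forall k, (0 < k)%N -> forall m : M, annM a 1 m <-> annM a k m) <->
  Gamma_killed.
Proof.
rewrite /annM; split=> [stable m [k [k_gt0 akm]]|killed [//|k] _ m].
  by rewrite -[a]expr1; apply/(stable k k_gt0).
rewrite expr1; split=> [am|akm]; last by apply: killed; exists k.+1.
by rewrite exprSr -scalerA am scaler0.
Qed.

Lemma HomQ_ideal_pow1_Gamma_killed k (f : R -> M) : Gamma_killed -> (0 < k)%N ->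
  HomQ (ideal_pow a k) f -> HomQ (ideal_pow a 1) f.
Proof.
move=> killed k_gt0 f_ak; case: (f_ak) => [fD [fZ _]]; split; [|split] => //.
move=> _ [r ->]; rewrite (HomQ_scale_eval1 _ f_ak) expr1 mulrC -scalerA.
by rewrite killed ?scaler0 //; exists k; rewrite (HomQ_ideal_pow_ann 1 f_ak).
Qed.

Lemma dlim_Hom_iso_Gamma_killed : dlim_Hom_iso <-> Gamma_killed.
Proof.
split=> [[phi iso] m [k [k_gt0 akm]]|killed].
  have sys_m : dl_carrier (@hom_system R M a) (k, fun x => x *: m).
    by split=> //; apply: HomQ_ideal_pow_scale.
  have sys_rm r : dl_carrier (@hom_system R M a) (k, fscl r (fun x => x *: m)).
    by split=> //; apply/HomQ_fscl/HomQ_ideal_pow_scale.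
  have [n [_ [_ /=]]] :=
    sub_iso_HomQ_ideal_pow1 iso (x := (k, fun x => x *: m))
      sys_m (sys_rm a) (sys_rm 0).
  rewrite !transport_hom_trans => /(congr1 (fun g => g 1)).
  by rewrite /fscl scale1r scale0r.
exists snd; split; [|split; [|split; [|split; [|split]]]].
- case=> k f [/= k_gt0 f_ak]; exact: HomQ_ideal_pow1_Gamma_killed killed k_gt0 f_ak.
- by case=> k f [l g] _ _ [n [_ [_ /=]]]; rewrite !transport_hom_trans.
- by case=> k f [l g] _ _ /=; rewrite !transport_hom_trans.
- by [].
- move=> [k f] [l g] _ _ /= fg; exists (maxn k l).
  by rewrite leq_maxl leq_maxr !transport_hom_trans.
- by move=> f f_a; exists (1%N, f).
Qed.

Lemma Gamma_Hom_iso_Gamma_killed : Gamma_Hom_iso <-> Gamma_killed.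
Proof.
split=> [[psi iso] m Gm|killed].
  rewrite -(scale0r m).
  exact: (sub_iso_HomQ_ideal_pow1 iso (x := m) Gm)
    (Gamma_scale _ Gm) (Gamma_scale _ Gm).
exists (fun m x => x *: m); split; [|split; [|split; [|split; [|split]]]].
- by move=> m Gm; apply: HomQ_ideal_pow_scale; rewrite expr1 killed.
- by move=> m n _ _ ->.
- by move=> m n _ _; apply: functional_extensionality => x; rewrite scalerDr.
- move=> r m _; apply: functional_extensionality => x.
  by rewrite /fscl !scalerA mulrC.
- by move=> m n _ _ /(congr1 (fun g => g 1)); rewrite !scale1r.
- move=> f f_a; exists (f 1).
    by exists 1%N; split=> //; apply: HomQ_ideal_pow_ann f_a.
  by apply: functional_extensionality => x; rewrite -(HomQ_scale_eval1 _ f_a).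
Qed.

Lemma short_exact_Gamma_killed :
  short_exact (@Gamma R M a) (fun _ : M => True) (@aM R M a) (fun m : M => m)
              (fun m : M => a *: m) <-> Gamma_killed.
Proof.
split=> [[_ _ _ ker _] m Gm|killed]; first by apply/(ker m) => //; exists m.
split=> //; last by move=> _ [m ->]; exists m.
- by move=> m _; exists m.
- move=> m _; split=> [am|[n Gn <-]]; last exact: killed.
  by exists m => //; exists 1%N; rewrite expr1.
Qed.

End Equivalences.

Theorem mainTheorem1 (R : comNzRingType) (M : lmodType R) (a : R) :
  [<->
   (* (1) M is a-reduced *)
   @a_reduced R M a;
   (* (2) a Gamma_a(M) = 0 *)
   (forall x : M, @aGamma R M a x <-> x = 0);
   (* (3) (0 :_M a) = (0 :_M a^k) for all k in Z^+ *)
   (forall k : nat, (0 < k)%N -> forall m : M, @annM R M a 1 m <-> @annM R M a k m);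
   (* (4) lim_k Hom_R(R/a^k, M) ~= Hom_R(R/a, M) *)
   (exists phi : nat * (R -> M) -> (R -> M),
      sub_iso (dl_carrier (@hom_system R M a))
              (dl_eq (@hom_trans R M))
              (dl_add (@fadd R M) (@hom_trans R M))
              (dl_scl (@fscl R M))
              (@HomQ R M (ideal_pow a 1)) (@fadd R M) (@fscl R M) phi);
   (* (5) Gamma_a(M) ~= Hom_R(R/a, M) *)
   (exists psi : M -> (R -> M),
      sub_iso (@Gamma R M a) (fun x y : M => x = y) (fun x y : M => x + y)
              (fun (r : R) (m : M) => r *: m)
              (@HomQ R M (ideal_pow a 1)) (@fadd R M) (@fscl R M) psi);
   (* (6) 0 -> Gamma_a(M) -> M -> aM -> 0 is short exact *)
   @short_exact M M M (@Gamma R M a) (fun _ : M => True) (@aM R M a)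
                (fun m : M => m) (fun m : M => a *: m)].
Proof.
have E1 := @a_reduced_Gamma_killed R M a.
have E2 := @aGamma_eq0_Gamma_killed R M a.
have E3 := @annM_stable_Gamma_killed R M a.
have E4 := @dlim_Hom_iso_Gamma_killed R M a.
have E5 := @Gamma_Hom_iso_Gamma_killed R M a.
have E6 := @short_exact_Gamma_killed R M a.
tfae=> H.
- exact/E2/E1.
- exact/E3/E2.
- exact/E4/E3.
- exact/E5/E4.
- exact/E6/E5.
- exact/E1/E6.
Qed.
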